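(* Let $G=(V,E)$ be an $r$-regular graph on a finite vertex set $V$ with $|V|$ even, and let $d\mapsto\{H(d),A(d)\}$, $d\in\{1,\dots,r\}$, be a HAP table. Then $P(G,HA)$ is non-empty if and only if there exists $v\in\overline{\mathbf N}(PM(V))$ such that $v|_K=\chi_E$ and $v(c)=|\{d\in\{1,\dots,r\}: \{H(d),A(d)\}=c\}|$ for every $c\in C$.
   Context: Let $V$ be a finite set with $|V|$ even. $K=\binom{V}{2}$ is the set of 2-element subsets of $V$. An equal partition of $V$ is an unordered pair $\{H,A\}$ of disjoint subsets with $H\cup A=V$ and $|H|=|A|=|V|/2$; $C=C(V)$ is the set of equal partitions. For $c=\{H,A\}\in C$, $B_c$ is the complete bipartite graph with parts $H$ and $A$. Vectors live in $\mathbb N^{K\cup C}$ with $\mathbb N=\{0,1,2,\dots\}$; $v|_K$ denotes the restriction to coordinates in $K$. For $E\subseteq K$, $\chi_E\in\{0,1\}^K$ is its indicator vector. For $E\subseteq K$ and $c\in C$, $\chi_{E,c}\in\mathbb N^{K\cup C}$ has $K$-components $\chi_E$ and $C$-components equal to the indicator of $c$. $PM(V)=\{\chi_{q,c}: c\in C,\ q\text{ a perfect matching of }B_c\}$. For $\mathcal M\subseteq\mathbb N^{K\cup C}$, $\mathbf N(\mathcal M)$ is the set of finite nonnegative integer combinations of elements of $\mathcal M$, and $\overline{\mathbf N}(\mathcal M)=\{v\in\mathbb N^{K\cup C}: kv\in\mathbf N(\mathcal M)\text{ for some integer }k\ge1\}$. For an $r$-regular graph $G=(V,E)$, a HAP table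 is a map assigning to each $d\in\{1,\dots,r\}$ an equal partition $\{H(d),A(d)\}\in C$. $P(G,HA)$ is the set of real vectors $(x_{e,d})_{e\in K,\,d\in\{1,\dots,r\}}$ satisfying: (1) $\sum_{d=1}^r x_{e,d}=1$ for every $e\in E$, and $x_{e,d}=0$ for every $e\in K\setminus E$ and every $d$; (2) for every $d$ and every $a\in V$, $\sum_{b\in V\setminus\{a\}}x_{\{a,b\},d}=1$; (3) $0\le x_{e,d}\le1$ for all $e\in E$ and all $d$; (4) $x_{\{a,b\},d}=0$ whenever $\{a,b\}\in E$ and $a,b$ are both in $H(d)$ or both in $A(d)$. *)

From Stdlib Require Import Reals.
From mathcomp Require Import all_boot.
Set Implicit Arguments. Unset Strict Implicit. Unset Printing Implicit Defensive.

Section Defs.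
Variable V : finType.

Definition inK (e : {set V}) : bool := #|e| == 2.

(* C = equal partitions {H, A}, represented as the unordered pair [set H; A] *)
Definition is_eqpart (c : {set {set V}}) : bool :=
  [exists H : {set V}, (c == [set H; ~: H]) && (#|H|.*2 == #|V|)].

(* vectors in N^{K u C}: a K-part and a C-part (coordinates outside K, C must be 0) *)
Definition vec := ({ffun {set V} -> nat} * {ffun {set {set V}} -> nat})%type.

Definition in_KC (v : vec) : Prop :=
  (forall e, ~~ inK e -> v.1 e = 0%N) /\ (forall c, ~~ is_eqpart c -> v.2 c = 0%N).

Definition vzero : vec := ([ffun _ => 0%N], [ffun _ => 0%N]).
Definition vadd (v w : vec) : vec :=
  ([ffun e => v.1 e + w.1 e]%N, [ffun c => v.2 c + w.2 c]%N).
Definition vscale (k : nat) (v : vec) : vec :=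
  ([ffun e => k * v.1 e]%N, [ffun c => k * v.2 c]%N).

Definition chiEc (E : {set {set V}}) (c : {set {set V}}) : vec :=
  ([ffun e => nat_of_bool (e \in E)], [ffun c' => nat_of_bool (c' == c)]).

Definition perfect_matching_B (c : {set {set V}}) (q : {set {set V}}) : Prop :=
  (forall e, e \in q -> inK e /\ forall P, P \in c -> ~~ (e \subset P)) /\
  (forall a : V, #|[set e in q | a \in e]| = 1%N).

Definition PM (v : vec) : Prop :=
  exists c q, is_eqpart c /\ perfect_matching_B c q /\ v = chiEc q c.

Definition Ncone (M : vec -> Prop) (v : vec) : Prop :=
  exists s : seq vec, (forall w, List.In w s -> M w) /\ v = foldr vadd vzero s.

Definition Nbar (M : vec -> Prop) (v : vec) : Prop :=
  in_KC v /\ exists k : nat, (1 <= k)%N /\ Ncone M (vscale k v).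

Definition regular_graph (E : {set {set V}}) (r : nat) : Prop :=
  (forall e, e \in E -> inK e) /\ (forall a : V, #|[set e in E | a \in e]| = r).

(* HAP table, indexed by d : 'I_r (standing for d+1 in {1..r}) *)
Definition HAP_table (r : nat) (HA : 'I_r -> {set {set V}}) : Prop :=
  forall d, is_eqpart (HA d).

Definition P_nonempty (E : {set {set V}}) (r : nat) (HA : 'I_r -> {set {set V}}) : Prop :=
  exists x : {set V} -> 'I_r -> R,
    (forall e, e \in E -> \big[Rplus/R0]_(d < r) x e d = R1) /\
    (forall e d, inK e -> e \notin E -> x e d = R0) /\
    (forall (d : 'I_r) (a : V), \big[Rplus/R0]_(b in V | b != a) x [set a; b] d = R1) /\
    (forall e d, e \in E -> Rle R0 (x e d) /\ Rle (x e d) R1) /\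
    (forall e d, e \in E -> [exists P in HA d, e \subset P] -> x e d = R0).

End Defs.

(* Backward direction.  If k * v is a sum of vectors chi_{q,c}, with q a perfect
   matching of B_c, then for each colour d the average of the indicator vectors
   of the k * #{d' | HA d' = HA d} matchings of class HA d is a point of P(G,HA)
   (section Averaging).

   Forward direction.  P(G,HA) is cut out by a rational linear system together
   with sign constraints, so it contains a rational point whose support lies in
   that of a given real point: rational solutions of a rational linear system are
   dense among its real solutions, by eliminating one variable at a time (section
   LinearSystems).  Clearing denominators gives, for each colour d, a k-regular
   multigraph whose edges cross the partition {H(d), A(d)}; by Hall's marriage
   theorem and König's theorem it is the sum of k perfect matchings of B_{HA d}.
   Listing all these matchings exhibits k times the target vector in N(PM(V)). *)

From HB Require Import structures.
From Stdlib Require Import Reals Lra ZArith QArith Qreals Classical.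
From mathcomp Require Import all_boot zify.
Set Implicit Arguments. Unset Strict Implicit. Unset Printing Implicit Defensive.
Close Scope Q_scope.

Section HallMarriage.
Variables (T U : finType) (f0 : T -> U).

Definition hall_condition (L : {set T}) (N : T -> {set U}) : Prop :=
  forall S : {set T}, S \subset L -> #|S| <= #|\bigcup_(x in S) N x|.

Definition sdr (L : {set T}) (N : T -> {set U}) (f : T -> U) : Prop :=
  {in L &, injective f} /\ {in L, forall x, f x \in N x}.

Lemma sdr_glue (L S : {set T}) (N : T -> {set U}) (f1 f2 : T -> U) :
  sdr S N f1 -> sdr (L :\: S) (fun x => N x :\: \bigcup_(y in S) N y) f2 ->
  sdr L N (fun x => if x \in S then f1 x else f2 x).
Proof.
move=> [f1i f1N] [f2i f2N].
have f2N' x : x \in L -> x \notin S -> f2 x \in N x /\ f2 x \notin \bigcup_(y in S) N y.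
  move=> xL xS; have xLS : x \in L :\: S by rewrite inE xS xL.
  by have /setDP [] := f2N x xLS; split.
have f1NS x : x \in S -> f1 x \in \bigcup_(y in S) N y.
  by move=> xS; apply/bigcupP; exists x => //; apply: f1N.
split=> [x y xL yL /=|x xL /=].
  case: ifP => xS; case: ifP => yS.
  - exact: f1i.
  - by move=> e; case: (f2N' y yL (negbT yS)) => _; rewrite -e f1NS.
  - by move=> e; case: (f2N' x xL (negbT xS)) => _; rewrite e f1NS.
  - by apply: f2i; rewrite inE ?xS ?yS.
by case: ifP => xS; [apply: f1N | case: (f2N' x xL (negbT xS))].
Qed.

Lemma bigcup_setD (S : {set T}) (N : T -> {set U}) (R : {set U}) :
  \bigcup_(x in S) (N x :\: R) = (\bigcup_(x in S) N x) :\: R.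
Proof.
apply/setP => u; rewrite !inE; apply/bigcupP/andP.
  by case=> x xS /setDP [uN uR]; split => //; apply/bigcupP; exists x.
by case=> uR /bigcupP [x xS uN]; exists x; rewrite ?inE ?uR.
Qed.

Lemma hall_tight_residual (L S : {set T}) (N : T -> {set U}) :
  hall_condition L N -> S \subset L -> #|\bigcup_(x in S) N x| = #|S| ->
  hall_condition (L :\: S) (fun x => N x :\: \bigcup_(y in S) N y).
Proof.
move=> hc SL tight S' S'LS; rewrite bigcup_setD.
set NS := \bigcup_(y in S) N y; set NS' := \bigcup_(y in S') N y.
have disj : S :&: S' = set0.
  apply/setP => x; rewrite !inE; apply/andP => -[xS /(subsetP S'LS)].
  by rewrite inE xS.
have := hc (S :|: S'); rewrite subUset SL (subset_trans S'LS (subsetDl _ _)).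
rewrite bigcup_setU cardsU disj cards0 cardsU cardsD setIC -/NS -/NS' => /(_ isT).
have := subset_leq_card (subsetIl NS' NS); rewrite -/NS in tight; lia.
Qed.

Lemma hall_slack_residual (L : {set T}) (N : T -> {set U}) x y :
  hall_condition L N -> x \in L ->
  (forall S, S != set0 -> S \proper L -> #|S| < #|\bigcup_(z in S) N z|) ->
  hall_condition (L :\ x) (fun z => N z :\ y).
Proof.
move=> hc xL slack S SLx; rewrite bigcup_setD.
have [->|Sn0] := eqVneq S set0; first by rewrite cards0.
have SpL : S \proper L.
  apply/properP; split; first exact: subset_trans SLx (subsetDl _ _).
  by exists x => //; apply/negP => /(subsetP SLx); rewrite !inE eqxx.
have := slack S Sn0 SpL; rewrite (cardsD1 y (\bigcup_(z in S) N z)); lia.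
Qed.

Lemma sdr_add_point (L : {set T}) (N : T -> {set U}) x y (f : T -> U) :
  y \in N x -> sdr (L :\ x) (fun z => N z :\ y) f ->
  sdr L N (fun z => if z == x then y else f z).
Proof.
move=> yN [fi fN].
have fN' z : z \in L -> z != x -> f z \in N z /\ f z != y.
  move=> zL zx; have zLx : z \in L :\ x by rewrite !inE zx zL.
  by have := fN z zLx; rewrite !inE => /andP [].
split=> [z w zL wL /=|z zL /=].
  case: eqP => [->|/eqP zx]; case: eqP => [->|/eqP wx] //.
  - by move=> e; case: (fN' w wL wx); rewrite -e eqxx.
  - by move=> e; case: (fN' z zL zx); rewrite e eqxx.
  - by apply: fi; rewrite !inE ?zx ?wx ?zL ?wL.
by case: eqP => [->|/eqP zx] //; case: (fN' z zL zx).
Qed.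

(* Hall's marriage theorem (f0 is an arbitrary default map, needed when L is empty). *)
Theorem hall_marriage (L : {set T}) (N : T -> {set U}) :
  hall_condition L N -> exists f, sdr L N f.
Proof.
move: {2}#|L| (leqnn #|L|) => n; elim: n L N => [|n IH] L N.
  rewrite leqn0 cards_eq0 => /eqP -> _.
  by exists f0; split => x; rewrite inE.
move=> hL hc.
(* Either some nonempty proper subset S of L is tight: treat S and L \ S
   separately; or every such subset has slack: match any x to any neighbour y. *)
case: (boolP [exists S : {set T}, [&& S != set0, S \proper L &
                                   #|\bigcup_(x in S) N x| == #|S|]]).
  case/existsP => S /and3P [Sn0 SpL /eqP tight]; have SL := proper_sub SpL.
  have [f1 hf1] : exists f, sdr S N f.
    apply: IH (fun S' sS' => hc S' (subset_trans sS' SL)).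
    by have := proper_card SpL; lia.
  have [f2 hf2] : exists f, sdr (L :\: S) (fun x => N x :\: \bigcup_(y in S) N y) f.
    apply: IH (hall_tight_residual hc SL tight).
    rewrite cardsDS //; have := card_gt0 S; rewrite Sn0; lia.
  by exists (fun x => if x \in S then f1 x else f2 x); apply: sdr_glue.
move=> /existsPn notight.
have [-> | [x xL]] := set_0Vmem L.
  by exists f0; split => z; rewrite inE.
have [y yN] : exists y, y \in N x.
  apply/set0Pn; rewrite -card_gt0.
  by have := hc [set x]; rewrite sub1set xL big_set1 cards1 => /(_ isT).
have slack S : S != set0 -> S \proper L -> #|S| < #|\bigcup_(z in S) N z|.
  move=> Sn0 SpL; have := notight S; rewrite Sn0 SpL /= ltn_neqAle eq_sym => ->.
  exact: hc (proper_sub SpL).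
have [f hf] : exists f, sdr (L :\ x) (fun z => N z :\ y) f.
  apply: IH (hall_slack_residual y hc xL slack).
  by move: hL; rewrite (cardsD1 x L) xL.
by exists (fun z => if z == x then y else f z); apply: sdr_add_point.
Qed.
End HallMarriage.

Section Edges.
Variable V : finType.

Lemma inK_at (e : {set V}) a : inK e -> a \in e -> exists2 b, b != a & e = [set a; b].
Proof.
move=> /cards2P [x [y [xy ->]]]; rewrite !inE => /orP [] /eqP ->.
  by exists y; rewrite // eq_sym.
by exists x; rewrite // setUC.
Qed.

Lemma inK_pair (a b : V) : b != a -> inK [set a; b].
Proof. by move=> ba; rewrite /inK cards2 (eq_sym a) ba. Qed.

Lemma pair_inj (a b b' : V) : [set a; b] = [set a; b'] -> b = b'.
Proof.
move=> e; have hb : b \in [set a; b'] by rewrite -e set22.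
have : b' \in [set a; b] by rewrite e set22.
by move: hb; rewrite !inE => /orP [] /eqP -> // /orP [] /eqP.
Qed.

Lemma big_edges_at (R : Type) (idx : R) (op : Monoid.com_law idx) (F : {set V} -> R) a :
  \big[op/idx]_(e | inK e && (a \in e)) F e = \big[op/idx]_(b | b != a) F [set a; b].
Proof.
rewrite (eq_bigl (mem [set [set a; b] | b in [set b | b != a]])).
  by rewrite big_imset; [apply: eq_bigl => b; rewrite inE | move=> b b' _ _; apply: pair_inj].
move=> e /=; apply/andP/imsetP.
  by case=> eK ae; have [b ba ->] := inK_at eK ae; exists b; rewrite ?inE.
by case=> b; rewrite inE => ba ->; rewrite inK_pair ?set21.
Qed.

Lemma degree_edges_at (Q : {set {set V}}) a : (forall e, e \in Q -> inK e) ->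
  \sum_(b | b != a) ([set a; b] \in Q : nat) = #|[set e in Q | a \in e]|.
Proof.
move=> QK; rewrite -(big_edges_at _ (fun e => (e \in Q : nat))) big_mkcond /=.
rewrite -sum1_card [RHS]big_mkcond /=; apply: eq_bigr => e _; rewrite !inE.
by case eQ: (e \in Q); rewrite ?(QK e eQ) /=; case: ifP.
Qed.
End Edges.

Section RegularBipartite.
Variables (V : finType) (H : {set V}).
Hypothesis H_half : #|H|.*2 = #|V|.

Definition PMB (q : {set {set V}}) : Prop := perfect_matching_B [set H; ~: H] q.

Definition crossing (M : {set V} -> nat) : Prop :=
  forall e, 0 < M e -> exists a b, [/\ a \in H, b \notin H & e = [set a; b]].

Definition regular (M : {set V} -> nat) (k : nat) : Prop :=
  forall a, \sum_(b | b != a) M [set a; b] = k.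

Lemma crossing_other_end (M : {set V} -> nat) a b :
  crossing M -> a \in H -> 0 < M [set a; b] -> b \notin H.
Proof.
move=> cM aH /cM [a' [b' [a'H b'H e]]].
have : b' \in [set a; b] by rewrite e set22.
by rewrite !inE => /orP [] /eqP b'E; [rewrite b'E aH in b'H | rewrite -b'E].
Qed.

Lemma crossing_loop0 (M : {set V} -> nat) a : crossing M -> M [set a; a] = 0.
Proof.
move=> cM; case: (posnP (M [set a; a])) => // /cM [a' [b' [a'H b'H]]].
move=> E; have : a' \in [set a; a] by rewrite E set21.
have : b' \in [set a; a] by rewrite E set22.
by rewrite !inE !orbb => /eqP b'a /eqP a'a; rewrite b'a -a'a a'H in b'H.
Qed.

(* A k-regular crossing multigraph with k > 0 satisfies Hall's condition on H:
   counting edge multiplicities, S sends k * #|S| edges into its neighbourhood,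
   which receives at most k times its size. *)
Lemma regular_hall_condition (M : {set V} -> nat) k :
  crossing M -> regular M k -> 0 < k ->
  hall_condition H (fun a => [set b | 0 < M [set a; b]]).
Proof.
move=> cM rM k_gt0.
have full a : \sum_b M [set a; b] = k by rewrite (bigD1 a) //= crossing_loop0 ?rM.
move=> S _; set NS := \bigcup_(x in S) _.
rewrite -(@leq_pmul2l k) //.
have -> : k * #|S| = \sum_(a in S) \sum_b M [set a; b].
  by rewrite mulnC -sum_nat_const; apply: eq_bigr => a _; rewrite full.
have -> : k * #|NS| = \sum_(b in NS) \sum_a M [set a; b].
  rewrite mulnC -sum_nat_const; apply: eq_bigr => b _; rewrite -(full b).
  by apply: eq_bigr => a _; rewrite setUC.
rewrite exchange_big /= (bigID (mem NS)) /= [X in _ + X]big1 ?addn0.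
  by apply: leq_sum => b _; rewrite [X in _ <= X](bigID (mem S)) /= leq_addr.
move=> b bNS; apply: big1 => a aS; case: (posnP (M [set a; b])) => // Mab.
by case/negP: bNS; apply/bigcupP; exists a; rewrite ?inE.
Qed.

(* An injection f from H into ~: H yields the perfect matching {a, f a}, a in H;
   it is onto ~: H because #|H| = #|~: H|. *)
Lemma sdr_perfect_matching (f : V -> V) :
  {in H &, injective f} -> (forall a, a \in H -> f a \notin H) ->
  PMB [set [set a; f a] | a in H].
Proof.
move=> fi fout; set q := [set _ | a in H].
have onto : f @: H = ~: H.
  apply/eqP; rewrite eqEcard; apply/andP; split.
    by apply/subsetP => b /imsetP [a aH ->]; rewrite inE fout.
  by rewrite card_in_imset // cardsCs setCK -H_half -addnn addnK.
have edges_at b a : a \in H -> (b == a) || (b == f a) ->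
    [set e in q | b \in e] = [set [set a; f a]].
  move=> aH hb; apply/setP => e; rewrite !inE; apply/andP/eqP => [|->]; last first.
    by split; [apply/imsetP; exists a | rewrite !inE].
  case=> /imsetP [a' a'H ->]; rewrite !inE.
  case/orP: hb => /eqP -> /orP [] /eqP.
  - by move=> <-.
  - by move=> faa'; have := fout a' a'H; rewrite -faa' aH.
  - by move=> faa'; have := fout a aH; rewrite faa' a'H.
  - by move/fi => -> //.
split=> [e /imsetP [a aH ->]|b].
  split; first by apply: inK_pair; apply: contraNneq (fout a aH) => ->.
  move=> P; rewrite !inE subUset !sub1set => /orP [] /eqP ->;
    by rewrite ?inE ?aH ?(negbTE (fout a aH)) ?andbF.
have [bH|bH] := boolP (b \in H); first by rewrite (edges_at b b) ?eqxx ?cards1.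
have /imsetP [a aH ->] : b \in f @: H by rewrite onto inE.
by rewrite (edges_at _ a) ?eqxx ?orbT ?cards1.
Qed.

Lemma regular_remove_matching (M : {set V} -> nat) k q :
  PMB q -> (forall e, e \in q -> 0 < M e) -> regular M k.+1 ->
  regular (fun e => M e - (e \in q)) k.
Proof.
move=> [qK qdeg] qM rM a.
have split_sum : \sum_(b | b != a) M [set a; b] =
    \sum_(b | b != a) (M [set a; b] - ([set a; b] \in q)) +
    \sum_(b | b != a) ([set a; b] \in q : nat).
  rewrite -big_split; apply: eq_bigr => b _ /=.
  by case: (boolP (_ \in q)) => [/qM|] /=; lia.
have q_deg : \sum_(b | b != a) ([set a; b] \in q : nat) = 1.
  by rewrite degree_edges_at ?qdeg // => e /qK [].
by move: (rM a); rewrite split_sum q_deg addn1 => -[].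
Qed.

Theorem regular_decomposition (M : {set V} -> nat) k :
  crossing M -> regular M k ->
  exists qs : seq {set {set V}}, [/\ size qs = k, (forall q, q \in qs -> PMB q) &
    forall e, \sum_(q <- qs) (e \in q : nat) = M e].
Proof.
elim: k M => [|k IH] M cM rM.
  exists [::]; split => // e; rewrite big_nil.
  case: (posnP (M e)) => // /[dup] Me /cM [a [b [aH bH eab]]].
  move: (rM a); move/eqP; rewrite sum_nat_eq0 => /forallP /(_ b).
  by rewrite -eab (contraNneq _ bH) => [/eqP Me0|->//]; rewrite Me0 in Me.
(* Otherwise Hall gives a perfect matching q inside M, and M - q is k-regular. *)
have [f [fi fN]] := hall_marriage id (regular_hall_condition cM rM (ltn0Sn k)).
have fM a : a \in H -> 0 < M [set a; f a] by move=> /fN; rewrite inE.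
pose q := [set [set a; f a] | a in H].
have qPM : PMB q.
  by apply: sdr_perfect_matching fi _ => a aH; apply: crossing_other_end cM aH (fM a aH).
have qM e : e \in q -> 0 < M e by move=> /imsetP [a aH ->]; apply: fM.
have [qs [size_qs qsPM qsM]] := IH _ (fun e Me => cM e (leq_trans Me (leq_subr _ _)))
                                   (regular_remove_matching qPM qM rM).
exists (q :: qs); split => [|q'|e] /=; first by rewrite size_qs.
  by rewrite inE => /orP [/eqP ->|/qsPM].
rewrite big_cons qsM; case: (boolP (e \in q)) => [/qM|] /=; lia.
Qed.
End RegularBipartite.

Lemma Rplus_associative : associative Rplus.
Proof. by move=> x y z; rewrite Rplus_assoc. Qed.
HB.instance Definition _ := Monoid.isComLaw.Build R R0 Rplus Rplus_associative Rplus_comm Rplus_0_l.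

Section RealSums.
Local Open Scope R_scope.

Lemma INR_sum (I : Type) (s : seq I) (P : pred I) (f : I -> nat) :
  INR (\sum_(i <- s | P i) f i) = \big[Rplus/0]_(i <- s | P i) INR (f i).
Proof. exact: (big_morph INR plus_INR (erefl _)). Qed.

Lemma sumR_mulr (I : Type) (s : seq I) (P : pred I) (F : I -> R) (c : R) :
  \big[Rplus/0]_(i <- s | P i) (F i * c) = (\big[Rplus/0]_(i <- s | P i) F i) * c.
Proof.
symmetry; apply: (big_morph (fun x => x * c)) => [x y|].
  exact: Rmult_plus_distr_r.
exact: Rmult_0_l.
Qed.

Lemma sumR_mull (I : Type) (s : seq I) (P : pred I) (F : I -> R) (c : R) :
  \big[Rplus/0]_(i <- s | P i) (c * F i) = c * \big[Rplus/0]_(i <- s | P i) F i.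
Proof. by rewrite Rmult_comm -sumR_mulr; apply: eq_bigr => i _; rewrite Rmult_comm. Qed.

Lemma sumR_const (I : finType) (A : {pred I}) (c : R) :
  \big[Rplus/0]_(i in A) c = INR #|A| * c.
Proof. by rewrite big_const; elim: #|A| => [|n IH]; rewrite ?S_INR /= ?IH; ring. Qed.

Lemma sumR_ge0 (I : Type) (s : seq I) (P : pred I) (F : I -> R) :
  (forall i, P i -> 0 <= F i) -> 0 <= \big[Rplus/0]_(i <- s | P i) F i.
Proof. by move=> F_ge0; apply: big_ind => //; [lra | move=> x y; lra]. Qed.
End RealSums.

Lemma InP (T : eqType) (x : T) (s : seq T) : reflect (List.In x s) (x \in s).
Proof.
elim: s => [|y s IH] /=; first by right.
rewrite inE; apply: (iffP orP) => [[/eqP ->|/IH]|[->|/IH]]; by [left | right | rewrite eqxx].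
Qed.

Section Rationals.
Local Open Scope R_scope.

Definition is_rat (x : R) : Prop := exists q : Q, x = Q2R q.

Lemma rat0 : is_rat 0. Proof. by exists 0%Q; rewrite RMicromega.Q2R_0. Qed.
Lemma rat1 : is_rat 1. Proof. by exists 1%Q; rewrite RMicromega.Q2R_1. Qed.
Lemma rat_IZR (n : Z) : is_rat (IZR n). Proof. by exists (inject_Z n); rewrite /Q2R /=; lra. Qed.

Lemma rat_plus x y : is_rat x -> is_rat y -> is_rat (x + y).
Proof. by move=> [p ->] [q ->]; exists (p + q)%Q; rewrite Q2R_plus. Qed.

Lemma rat_minus x y : is_rat x -> is_rat y -> is_rat (x - y).
Proof. by move=> [p ->] [q ->]; exists (p - q)%Q; rewrite Q2R_minus. Qed.

Lemma rat_mult x y : is_rat x -> is_rat y -> is_rat (x * y).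
Proof. by move=> [p ->] [q ->]; exists (p * q)%Q; rewrite Q2R_mult. Qed.

Lemma rat_div x y : is_rat x -> is_rat y -> is_rat (x / y).
Proof.
move=> [p ->] [q ->]; exists (p * / q)%Q; rewrite Q2R_mult RMicromega.Q2R_inv_ext.
case q0: (Qeq_bool q 0) => //=.
by rewrite (Qeq_eqR _ _ (Qeq_bool_eq _ _ q0)) RMicromega.Q2R_0 /Rdiv Rinv_0.
Qed.

Lemma rat_approx t eps : 0 < eps -> exists2 q, is_rat q & Rabs (q - t) < eps.
Proof.
move=> eps_gt0; have inv_gt0 : 0 < / eps by apply: Rinv_0_lt_compat.
have [N_gt N_le] := archimed (/ eps); set N := IZR (up (/ eps)) in N_gt N_le.
have [m_gt m_le] := archimed (t * N); set m := IZR (up (t * N)) in m_gt m_le.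
have N_gt0 : 0 < N by lra.
have epsN : 1 < eps * N by rewrite -(Rinv_r eps); [apply: Rmult_lt_compat_l | lra].
exists (m / N); first by apply: rat_div; apply: rat_IZR.
have -> : m / N - t = (m - t * N) / N by field; lra.
rewrite Rabs_right; last by apply/Rle_ge/Rlt_le/Rdiv_lt_0_compat; lra.
apply: (Rmult_lt_reg_r N) => //; rewrite /Rdiv Rmult_assoc Rinv_l; lra.
Qed.

Section LinearSystems.
Variable X : eqType.

Definition linform (vs : seq X) (a y : X -> R) : R := \big[Rplus/0]_(v <- vs) (a v * y v).

Definition lin_eqn : Type := ((X -> R) * R)%type.
Definition rat_eqn (q : lin_eqn) : Prop := (forall v, is_rat (q.1 v)) /\ is_rat q.2.
Definition rat_system (sys : seq lin_eqn) : Prop := forall q, List.In q sys -> rat_eqn q.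
Definition solves (vs : seq X) (sys : seq lin_eqn) (y : X -> R) : Prop :=
  forall q, List.In q sys -> linform vs q.1 y = q.2.

Lemma linform_cons v vs a y : linform (v :: vs) a y = a v * y v + linform vs a y.
Proof. by rewrite /linform big_cons. Qed.

Lemma linform_comb vs a a' c y :
  linform vs (fun w => a' w - c * a w) y = linform vs a' y - c * linform vs a y.
Proof. by elim: vs => [|v vs IH]; rewrite ?linform_cons ?IH /linform ?big_nil; lra. Qed.

Lemma eq_linform vs a y z : (forall w, w \in vs -> y w = z w) ->
  linform vs a y = linform vs a z.
Proof. by move=> yz; apply: eq_big_seq => w /yz ->. Qed.

Lemma rat_linform vs a y : (forall w, is_rat (a w)) -> (forall w, w \in vs -> is_rat (y w)) ->
  is_rat (linform vs a y).
Proof.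
move=> ra; elim: vs => [|v vs IH] ry; first by rewrite /linform big_nil; apply: rat0.
rewrite linform_cons; apply: rat_plus; first by apply: rat_mult => //; apply: ry; rewrite mem_head.
by apply: IH => w wvs; apply: ry; rewrite inE wvs orbT.
Qed.

Definition coef_mass (vs : seq X) (a : X -> R) : R := \big[Rplus/0]_(v <- vs) Rabs (a v).

Lemma coef_mass_ge0 vs a : 0 <= coef_mass vs a.
Proof.
apply: (big_ind (fun x => 0 <= x)) => [|x y|v _]; [lra | lra | exact: Rabs_pos].
Qed.

Lemma linform_lipschitz vs a y z eps : (forall w, w \in vs -> Rabs (y w - z w) <= eps) ->
  Rabs (linform vs a y - linform vs a z) <= coef_mass vs a * eps.
Proof.
elim: vs => [|v vs IH] yz.
  by rewrite /linform /coef_mass !big_nil Rminus_0_r Rabs_R0; lra.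
rewrite !linform_cons /coef_mass big_cons -/(coef_mass vs a).
have IHvs := IH (fun w wvs => yz w (mem_behead (s := v :: vs) wvs)).
have := Rmult_le_compat_l _ _ _ (Rabs_pos (a v)) (yz v (mem_head _ _)).
have -> : a v * y v + linform vs a y - (a v * z v + linform vs a z)
        = a v * (y v - z v) + (linform vs a y - linform vs a z) by ring.
have := Rabs_triang (a v * (y v - z v)) (linform vs a y - linform vs a z).
rewrite Rabs_mult; lra.
Qed.

Definition rat_approximation vs sys (y : X -> R) eps (z : X -> R) : Prop :=
  (forall w, w \in vs -> is_rat (z w) /\ Rabs (z w - y w) < eps) /\ solves vs sys z.

Definition approximable (vs : seq X) : Prop :=
  forall sys y eps, rat_system sys -> solves vs sys y -> 0 < eps ->
  exists z, rat_approximation vs sys y eps z.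

Lemma approximable_nil : approximable [::].
Proof. by move=> sys y eps _ hy _; exists y. Qed.

Section AddVariable.
Variables (v : X) (vs : seq X).
Hypotheses (v_new : v \notin vs) (IH : approximable vs).

Definition extend (t : R) (z : X -> R) : X -> R := fun w => if w == v then t else z w.

Lemma extend_old t z w : w \in vs -> extend t z w = z w.
Proof. by rewrite /extend; case: eqP => // ->; rewrite (negbTE v_new). Qed.

Lemma linform_extend a t z : linform (v :: vs) a (extend t z) = a v * t + linform vs a z.
Proof. by rewrite linform_cons (eq_linform a (@extend_old t z)) /extend eqxx. Qed.

Lemma approx_unused sys y eps : (forall q, List.In q sys -> q.1 v = 0) ->
  rat_system sys -> solves (v :: vs) sys y -> 0 < eps ->
  exists z, rat_approximation (v :: vs) sys y eps z.
Proof.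
move=> unused rsys hy eps_gt0.
have hy' : solves vs sys y by move=> q qin; rewrite -(hy q qin) linform_cons unused //; ring.
have [z' [z'close z'sol]] := IH rsys hy' eps_gt0.
have [t t_rat t_close] := rat_approx (y v) eps_gt0.
exists (extend t z'); split => [w|q qin].
  rewrite inE => /orP [/eqP ->|wvs]; first by rewrite /extend eqxx.
  by rewrite extend_old //; apply: z'close.
by rewrite linform_extend unused // z'sol //; ring.
Qed.

(* Choice of the tolerance on the remaining variables: an error eps' on them moves
   the pivot value by at most S * eps' / A < eps, where A = |a v| and S is the
   coefficient mass of the pivot equation. *)
Lemma pivot_tolerance (A S eps : R) : 0 < A -> 0 <= S -> 0 < eps ->
  exists eps', [/\ 0 < eps', eps' <= eps & S * eps' < eps * A].
Proof.
move=> A_gt0 S_ge0 eps_gt0; set t := / (A + S).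
have t_gt0 : 0 < t by apply: Rinv_0_lt_compat; lra.
have ht : A * t + S * t = 1 by rewrite -Rmult_plus_distr_r; apply: Rinv_r; lra.
have At : 0 < A * t by apply: Rmult_lt_0_compat.
have St : 0 <= S * t by apply: Rmult_le_pos; lra.
have epsA : 0 < eps * A by apply: Rmult_lt_0_compat.
exists (eps * (A * t)); split; first exact: Rmult_lt_0_compat.
  by rewrite -{2}(Rmult_1_r eps); apply: Rmult_le_compat_l; lra.
have -> : S * (eps * (A * t)) = eps * A * (S * t) by ring.
by rewrite -{2}(Rmult_1_r (eps * A)); apply: Rmult_lt_compat_l; lra.
Qed.

(* Otherwise eliminate v with a pivot equation (a, b), a v <> 0, approximate the
   remaining system on vs, and solve the pivot equation for v. *)
Definition eliminate (a : X -> R) (b : R) (q : lin_eqn) : lin_eqn :=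
  (fun w => q.1 w - q.1 v / a v * a w, q.2 - q.1 v / a v * b).

Lemma approx_pivot sys y eps a b : List.In (a, b) sys -> a v <> 0 ->
  rat_system sys -> solves (v :: vs) sys y -> 0 < eps ->
  exists z, rat_approximation (v :: vs) sys y eps z.
Proof.
move=> ab_in av0 rsys hy eps_gt0.
have [ra rb] := rsys _ ab_in; rewrite /= in ra rb.
have rsys' : rat_system (map (eliminate a b) sys).
  move=> _ /List.in_map_iff [[a' b'] [<- /rsys [ra' rb']]] /=.
  by split => [w|]; apply: rat_minus => //; apply: rat_mult => //; apply: rat_div.
have hab := hy _ ab_in; rewrite /= linform_cons in hab.
have hy' : solves vs (map (eliminate a b) sys) y.
  move=> _ /List.in_map_iff [[a' b'] [<- qin]] /=.
  have := hy _ qin; rewrite /= linform_comb linform_cons -hab => <-; field; exact: av0.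
have av_gt0 : 0 < Rabs (a v) by apply: Rabs_pos_lt.
have [eps' [eps'_gt0 eps'_le S_eps']] := pivot_tolerance av_gt0 (coef_mass_ge0 vs a) eps_gt0.
have [z' [z'close z'sol]] := IH rsys' hy' eps'_gt0.
pose t := (b - linform vs a z') / a v.
exists (extend t z'); split => [w|[a' b'] qin /=].
  rewrite inE => /orP [/eqP ->|wvs]; last first.
    by rewrite extend_old //; have [? ?] := z'close w wvs; split => //; lra.
  rewrite /extend eqxx; split.
    apply: rat_div => //; apply: rat_minus => //; apply: rat_linform => // u uvs.
    by case: (z'close u uvs).
  have -> : t - y v = (linform vs a y - linform vs a z') / a v by rewrite /t -hab; field.
  rewrite /Rdiv Rabs_mult Rabs_inv.
  apply: (Rmult_lt_reg_r (Rabs (a v))) => //; rewrite Rmult_assoc Rinv_l; last lra.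
  have := linform_lipschitz a (fun w wvs => Rlt_le _ _ (proj2 (z'close w wvs))).
  by rewrite Rabs_minus_sym; lra.
have := z'sol _ (List.in_map (eliminate a b) _ _ qin); rewrite /= linform_comb => h.
rewrite linform_extend /t.
have -> : linform vs a' z' = b' - a' v / a v * b + a' v / a v * linform vs a z' by lra.
by field.
Qed.
End AddVariable.

Lemma approximable_uniq (vs : seq X) : uniq vs -> approximable vs.
Proof.
elim: vs => [|v vs IH] /=; first by move=> _; apply: approximable_nil.
move=> /andP [v_new /IH {}IH] sys y eps rsys hy eps_gt0.
case: (classic (exists q, List.In q sys /\ q.1 v <> 0)) => [[[a b] [ab_in av0]]|unused].
  exact: approx_pivot ab_in av0 rsys hy eps_gt0.
apply: approx_unused => // q qin; apply: NNPP => qv; apply: unused; by exists q.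
Qed.
End LinearSystems.

Lemma pos_lower_bound (T : eqType) (s : seq T) (f : T -> R) :
  exists2 eps, 0 < eps & forall p, p \in s -> 0 < f p -> eps <= f p.
Proof.
elim: s => [|p s [eps eps_gt0 IH]]; first by exists 1; [lra | by []].
have [fp_gt0|fp_le0] := Rlt_dec 0 (f p).
  exists (Rmin eps (f p)); first exact: Rmin_glb_lt.
  move=> q; rewrite inE => /orP [/eqP -> _|qs fq]; first exact: Rmin_r.
  exact: Rle_trans (Rmin_l _ _) (IH q qs fq).
exists eps => // q; rewrite inE => /orP [/eqP -> /fp_le0 []|]; exact: IH.
Qed.

Section FiniteSystems.
Variable X : finType.

Definition sum_eqn (P : pred X) (b : R) : lin_eqn X := (fun p => if P p then 1 else 0, b).

Lemma linform_sum_eqn (P : pred X) b z :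
  linform (index_enum X) (sum_eqn P b).1 z = \big[Rplus/0]_(p | P p) z p.
Proof. by rewrite /linform [RHS]big_mkcond; apply: eq_bigr => p _ /=; case: (P p); ring. Qed.

Lemma rat_sum_eqn (P : pred X) b : is_rat b -> rat_eqn (sum_eqn P b).
Proof. by move=> rb; split => // p /=; case: (P p); [apply: rat1 | apply: rat0]. Qed.

(* A rational linear system with a nonnegative real solution y has a nonnegative
   rational solution vanishing wherever y does: impose these zeros as extra
   equations and approximate y closely enough to keep its positive entries. *)
Lemma rational_point (sys : seq (lin_eqn X)) (y : X -> R) :
  rat_system sys -> solves (index_enum X) sys y -> (forall p, 0 <= y p) ->
  exists z, [/\ forall p, is_rat (z p), forall p, 0 <= z p,
                forall p, y p = 0 -> z p = 0 & solves (index_enum X) sys z].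
Proof.
move=> rsys hy y_ge0.
pose vanishes p := if Req_EM_T (y p) 0 then true else false.
have vanishesP p : reflect (y p = 0) (vanishes p) by rewrite /vanishes; case: Req_EM_T; constructor.
pose zeros := List.map (fun p => sum_eqn (pred1 p) 0) [seq p <- index_enum X | vanishes p].
have zero_eqn p : vanishes p -> List.In (sum_eqn (pred1 p) 0) zeros.
  by move=> vp; apply: List.in_map; apply/InP; rewrite mem_filter vp mem_index_enum.
have rsys' : rat_system (sys ++ zeros).
  move=> q /List.in_app_iff [/rsys //|/List.in_map_iff [p [<- _]]].
  exact/rat_sum_eqn/rat0.
have hy' : solves (index_enum X) (sys ++ zeros) y.
  move=> q /List.in_app_iff [/hy //|/List.in_map_iff [p [<- /InP]]].
  by rewrite mem_filter => /andP [/vanishesP yp _]; rewrite linform_sum_eqn big_pred1_eq.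
have [eps eps_gt0 eps_le] := pos_lower_bound (index_enum X) y.
have [z [zclose zsol]] := approximable_uniq (index_enum_uniq X) rsys' hy' eps_gt0.
have z0 p : y p = 0 -> z p = 0.
  move=> /vanishesP /zero_eqn qin; have := zsol _ (List.in_or_app _ _ _ (or_intror qin)).
  by rewrite linform_sum_eqn big_pred1_eq.
exists z; split => [p|p|//|q qin]; first by case: (zclose p (mem_index_enum p)).
  have [yp_gt0|/esym yp0] := Rle_lt_or_eq_dec _ _ (y_ge0 p); last by rewrite z0 //; apply: Rle_refl.
  have := eps_le p (mem_index_enum p) yp_gt0; have [_ /Rabs_def2 []] := zclose p (mem_index_enum p).
  lra.
exact: zsol (List.in_or_app _ _ _ (or_introl qin)).
Qed.

Lemma common_denominator (z : X -> R) : (forall p, is_rat (z p)) ->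
  exists2 k : nat, (0 < k)%N & exists m : X -> Z, forall p, INR k * z p = IZR (m p).
Proof.
move=> rz.
suff [k k_gt0 [m hm]] : exists2 k : nat, (0 < k)%N &
    exists m : X -> Z, forall p, p \in index_enum X -> INR k * z p = IZR (m p).
  by exists k => //; exists m => p; apply/hm/mem_index_enum.
elim: (index_enum X) => [|p s [k k_gt0 [m hm]]]; first by exists 1%N => //; exists (fun _ => 0%Z).
have [[n d] zp] := rz p; set d' := Pos.to_nat d.
have d'R : INR d' = IZR (Z.pos d) by rewrite INR_IZR_INZ positive_nat_Z.
exists (k * d')%N; first by rewrite muln_gt0 k_gt0; apply/ltP/Pos2Nat.is_pos.
exists (fun q => if q == p then (Z.of_nat k * n)%Z else (m q * Z.pos d)%Z) => q.
rewrite inE -multE mult_INR d'R; case: eqP => [-> _|_ /= /hm hmq].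
  by rewrite zp /Q2R /= mult_IZR -INR_IZR_INZ; field; apply: IZR_neq.
by rewrite mult_IZR -hmq; ring.
Qed.

Lemma nat_scaling (z : X -> R) : (forall p, is_rat (z p)) -> (forall p, 0 <= z p) ->
  exists2 k : nat, (0 < k)%N & exists M : X -> nat, forall p, INR k * z p = INR (M p).
Proof.
move=> rz z_ge0; have [k k_gt0 [m hm]] := common_denominator rz.
exists k => //; exists (fun p => Z.to_nat (m p)) => p.
have m_ge0 : (0 <= m p)%Z by apply: le_IZR; rewrite -hm; apply/Rmult_le_pos/z_ge0/pos_INR.
by rewrite hm INR_IZR_INZ Z2Nat.id.
Qed.
End FiniteSystems.
End Rationals.


Section MatchingVectors.
Variable V : finType.

Lemma vsum_fst (s : seq (vec V)) e : (foldr (@vadd V) (vzero V) s).1 e = \sum_(w <- s) w.1 e.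
Proof. by elim: s => [|w s IH] /=; rewrite ?big_nil ?big_cons ffunE ?IH. Qed.

Lemma vsum_snd (s : seq (vec V)) c : (foldr (@vadd V) (vzero V) s).2 c = \sum_(w <- s) w.2 c.
Proof. by elim: s => [|w s IH] /=; rewrite ?big_nil ?big_cons ffunE ?IH. Qed.

(* The number of matchings of class c in s that contain the edge e. *)
Definition class_count (s : seq (vec V)) (c : {set {set V}}) (e : {set V}) : nat :=
  \sum_(w <- s) w.2 c * w.1 e.

Section ClassCounts.
Variable s : seq (vec V).
Hypothesis sPM : forall w, w \in s -> PM w.

(* Every matching has exactly one class. *)
Lemma class_count_sum e : \sum_c class_count s c e = \sum_(w <- s) w.1 e.
Proof.
rewrite /class_count exchange_big /=; apply: eq_big_seq => w /sPM [c0 [q [_ [_ ->]]]].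
rewrite (bigD1 c0) //= !ffunE eqxx mul1n big1 ?addn0 // => c /negbTE.
by rewrite ffunE => ->.
Qed.

(* Indicator vectors have 0/1 coordinates, so counts are bounded by either factor. *)
Lemma class_count_le_class c e : class_count s c e <= \sum_(w <- s) w.2 c.
Proof.
rewrite /class_count !big_seq; apply: leq_sum => w /sPM [c0 [q [_ [_ ->]]]].
by rewrite !ffunE; case: (e \in q); rewrite ?muln1 ?muln0.
Qed.

Lemma class_count_le_edge c e : class_count s c e <= \sum_(w <- s) w.1 e.
Proof.
rewrite /class_count !big_seq; apply: leq_sum => w /sPM [c0 [q [_ [_ ->]]]].
by rewrite !ffunE; case: (_ == _); rewrite ?mul1n ?mul0n.
Qed.

(* Each matching covers every vertex exactly once. *)
Lemma class_count_degree c a :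
  \sum_(b | b != a) class_count s c [set a; b] = \sum_(w <- s) w.2 c.
Proof.
rewrite /class_count exchange_big /=; apply: eq_big_seq => w /sPM [c0 [q [_ [[qK qdeg] ->]]]].
rewrite -big_distrr /= (eq_bigr (fun b => ([set a; b] \in q : nat))) => [|b _].
  by rewrite degree_edges_at ?qdeg ?muln1 // => e /qK [].
by rewrite ffunE.
Qed.

(* A matching of class c has no edge inside a part of c. *)
Lemma class_count_inside (c : {set {set V}}) (e P : {set V}) :
  P \in c -> e \subset P -> class_count s c e = 0.
Proof.
move=> Pc eP; rewrite /class_count big_seq; apply: big1 => w /sPM [c0 [q [_ [[qK _] ->]]]].
rewrite !ffunE; case: eqP => [c0c|] /=; last by rewrite mul0n.
rewrite mul1n; case: (boolP (e \in q)) => // /qK [_ /(_ P)]; rewrite -c0c Pc eP => /(_ isT) //.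
Qed.
End ClassCounts.

Definition multiplicity (r : nat) (HA : 'I_r -> {set {set V}}) (c : {set {set V}}) : nat :=
  #|[set d | HA d == c]|.

Lemma multiplicity_gt0 r (HA : 'I_r -> {set {set V}}) d : 0 < multiplicity HA (HA d).
Proof. by rewrite /multiplicity card_gt0; apply/set0Pn; exists d; rewrite inE. Qed.

Section Averaging.
Local Open Scope R_scope.
Variables (E : {set {set V}}) (r : nat) (HA : 'I_r -> {set {set V}}) (k : nat) (s : seq (vec V)).
Hypotheses (EK : forall e, e \in E -> inK e) (k_gt0 : (0 < k)%N) (sPM : forall w, w \in s -> PM w).
Hypothesis edge_sums : forall e, inK e -> (\sum_(w <- s) w.1 e = k * (e \in E))%N.
Hypothesis class_sums : forall c, (\sum_(w <- s) w.2 c = k * multiplicity HA c)%N.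

Definition average (e : {set V}) (d : 'I_r) : R :=
  INR (class_count s (HA d) e) / (INR k * INR (multiplicity HA (HA d))).

Lemma kR_gt0 : 0 < INR k. Proof. exact/lt_0_INR/ltP. Qed.

Lemma average_ge0 e d : 0 <= average e d.
Proof.
apply: Rmult_le_pos; first exact: pos_INR.
apply/Rlt_le/Rinv_0_lt_compat/Rmult_lt_0_compat; first exact: kR_gt0.
exact/lt_0_INR/ltP/multiplicity_gt0.
Qed.

(* Group the colours d by their class c = HA d. *)
Lemma average_edge_sum e : e \in E -> \big[Rplus/0]_(d < r) average e d = 1.
Proof.
move=> eE; have := kR_gt0 => kR.
rewrite (partition_big HA xpredT) //= (eq_bigr (fun c => INR (class_count s c e) * / INR k)).
  by rewrite sumR_mulr -INR_sum class_count_sum // edge_sums ?EK // eE muln1; field; lra.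
move=> c _.
rewrite (eq_bigr (fun _ => INR (class_count s c e) / (INR k * INR (multiplicity HA c))));
  last by move=> d /eqP <-.
rewrite (eq_bigl (fun d => d \in [set d | HA d == c])) => [|d]; last by rewrite inE.
rewrite sumR_const -/(multiplicity HA c).
case: (posnP (multiplicity HA c)) => [m0|/ltP/lt_0_INR mc].
  have := class_count_le_class sPM c e; rewrite class_sums m0 muln0 leqn0 => /eqP ->.
  by rewrite /=; ring.
by field; split; lra.
Qed.

Lemma average_nonedge e d : inK e -> e \notin E -> average e d = 0.
Proof.
move=> eK eE; have := class_count_le_edge sPM (HA d) e.
by rewrite edge_sums // (negbTE eE) muln0 leqn0 => /eqP c0; rewrite /average c0 /Rdiv Rmult_0_l.
Qed.

Lemma average_degree d a : \big[Rplus/0]_(b in V | b != a) average [set a; b] d = 1.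
Proof.
rewrite /average /Rdiv sumR_mulr -INR_sum (eq_bigl (fun b => b != a)) // class_count_degree //.
rewrite class_sums mult_INR; have := kR_gt0; have := multiplicity_gt0 HA d => /ltP/lt_0_INR.
by move=> mR kR; field; split; lra.
Qed.

Lemma average_inside (e : {set V}) d : [exists P in HA d, e \subset P] -> average e d = 0.
Proof.
by case/existsP => P /andP [PH eP]; rewrite /average (class_count_inside sPM PH eP) /Rdiv Rmult_0_l.
Qed.

Lemma P_nonempty_of_matchings : P_nonempty E HA.
Proof.
exists average; split; first exact: average_edge_sum.
split; first by move=> e d; apply: average_nonedge.
split; first exact: average_degree.
split; last by move=> e d _; apply: average_inside.
move=> e d eE; split; first exact: average_ge0.
change (average e d <= 1); have := average_edge_sum eE; rewrite (bigD1 d) //= => <-.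
rewrite -{1}(Rplus_0_r (average e d)).
by apply/Rplus_le_compat_l/sumR_ge0 => i _; apply: average_ge0.
Qed.
End Averaging.
End MatchingVectors.

Section Forward.
Variables (V : finType) (E : {set {set V}}) (r : nat) (HA : 'I_r -> {set {set V}}).

(* The variables of P(G,HA) are the pairs (edge, colour). *)
Local Notation var := ({set V} * 'I_r)%type.
Local Open Scope R_scope.

Lemma sum_at_edge (F : var -> R) e :
  \big[Rplus/0]_(p | p.1 == e) F p = \big[Rplus/0]_(d < r) F (e, d).
Proof.
rewrite (eq_bigr (fun p => F (p.1, p.2))) => [|[] //].
rewrite (eq_bigl (fun p => (p.1 == e) && xpredT p.2)) => [|p]; last by rewrite andbT.
by rewrite -(pair_big_dep (fun i => i == e) (fun _ => xpredT) (fun i j => F (i, j))) big_pred1_eq.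
Qed.

Lemma sum_at_vertex (F : var -> R) d a :
  \big[Rplus/0]_(p | (p.2 == d) && (inK p.1 && (a \in p.1))) F p =
  \big[Rplus/0]_(b | b != a) F ([set a; b], d).
Proof.
rewrite (eq_bigr (fun p => F (p.1, p.2))) => [|[] //].
rewrite (eq_bigl (fun p => (inK p.1 && (a \in p.1)) && (p.2 == d))) => [|p]; last by rewrite andbC.
rewrite -(pair_big_dep (fun i => inK i && (a \in i)) (fun _ j => j == d) (fun i j => F (i, j))).
by rewrite (eq_bigr (fun i => F (i, d))) => [|i _]; rewrite ?big_edges_at ?big_pred1_eq.
Qed.

Definition edge_eqn (e : {set V}) : lin_eqn var := sum_eqn (fun p => p.1 == e) 1.
Definition vertex_eqn (da : 'I_r * V) : lin_eqn var :=
  sum_eqn (fun p => (p.2 == da.1) && (inK p.1 && (da.2 \in p.1))) 1.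
Definition P_system : seq (lin_eqn var) :=
  List.map edge_eqn (enum E) ++ List.map vertex_eqn (index_enum ('I_r * V)%type).

Lemma P_system_rat : rat_system P_system.
Proof.
by move=> q /List.in_app_iff [] /List.in_map_iff [x [<- _]]; apply/rat_sum_eqn/rat1.
Qed.

Lemma solves_P_systemP (z : var -> R) :
  solves (index_enum var) P_system z <->
  (forall e, e \in E -> \big[Rplus/0]_(d < r) z (e, d) = 1) /\
  (forall d a, \big[Rplus/0]_(b | b != a) z ([set a; b], d) = 1).
Proof.
split=> [zsol|[zE zV] q].
  split=> [e eE|d a].
    have := zsol (edge_eqn e); rewrite linform_sum_eqn sum_at_edge; apply.
    by apply/List.in_or_app; left; apply/List.in_map/InP; rewrite mem_enum.
  have := zsol (vertex_eqn (d, a)); rewrite linform_sum_eqn sum_at_vertex; apply.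
  by apply/List.in_or_app; right; apply/List.in_map/InP; rewrite mem_index_enum.
case/List.in_app_iff => /List.in_map_iff [x [<- /InP xin]]; rewrite linform_sum_eqn.
  by rewrite sum_at_edge zE // -mem_enum.
by case: x {xin} => d a; rewrite sum_at_vertex zV.
Qed.

Lemma rational_P_point : P_nonempty E HA ->
  exists z : var -> R, [/\ forall p, is_rat (z p), forall p, 0 <= z p,
    solves (index_enum var) P_system z &
    forall e d, 0 < z (e, d) -> e \in E /\ ~~ [exists P in HA d, e \subset P]].
Proof.
move=> [x [x_edge [x_nonedge [x_vertex [x_bounds x_inside]]]]].
pose y (p : var) := if p.1 \in E then x p.1 p.2 else 0.
have y_ge0 p : 0 <= y p.
  by rewrite /y; case: ifP => [pE|_]; [case: (x_bounds _ p.2 pE) | apply: Rle_refl].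
have ysol : solves (index_enum var) P_system y.
  apply/solves_P_systemP; split=> [e eE|d a].
    by change 1 with R1; rewrite -(x_edge e eE); apply: eq_bigr => d _; rewrite /y /= eE.
  change 1 with R1; rewrite -(x_vertex d a); apply: eq_big => // b ba; rewrite /y /=.
  by case: ifP => // abE; rewrite x_nonedge ?abE ?inK_pair.
have [z [z_rat z_ge0 z0 zsol]] := rational_point P_system_rat ysol y_ge0.
exists z; split => // e d z_gt0.
have y_ne0 : y (e, d) <> 0 by move=> /z0 z0'; lra.
have eE : e \in E by move: y_ne0; rewrite /y /=; case: ifP.
by split => //; apply/negP => /(x_inside e d eE); rewrite /y /= eE in y_ne0.
Qed.

Lemma integral_P_point : P_nonempty E HA ->
  exists2 k : nat, (0 < k)%N & exists M : var -> nat, [/\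
    forall e, (\sum_(d < r) M (e, d) = k * (e \in E))%N,
    forall d a, (\sum_(b | b != a) M ([set a; b], d) = k)%N &
    forall e d, (0 < M (e, d))%N -> e \in E /\ ~~ [exists P in HA d, e \subset P]].
Proof.
move=> /rational_P_point [z [z_rat z_ge0 /solves_P_systemP [zE zV] zsupp]].
have [k k_gt0 [M hM]] := nat_scaling z_rat z_ge0.
have kR : 0 < INR k by apply/lt_0_INR/ltP.
have scaled (I : finType) (P : pred I) (f : I -> var) :
    INR (\sum_(i | P i) M (f i)) = INR k * \big[Rplus/0]_(i | P i) z (f i).
  by rewrite INR_sum -sumR_mull; apply: eq_bigr => i _; rewrite hM.
have Msupp e d : (0 < M (e, d))%N -> 0 < z (e, d).
  move=> /ltP/lt_0_INR; rewrite -hM => Mpos; case: (z_ge0 (e, d)) => // z0.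
  by rewrite -z0 Rmult_0_r in Mpos; lra.
exists k => //; exists M; split => [e|d a|e d /Msupp /zsupp //].
  case: (boolP (e \in E)) => eE; last first.
    rewrite muln0 big1 // => d _; apply/eqP; rewrite -leqn0 leqNgt.
    by apply: contra eE => /Msupp /zsupp [].
  by apply: INR_eq; rewrite scaled zE // muln1 Rmult_1_r.
by apply: INR_eq; rewrite scaled zV Rmult_1_r.
Qed.
End Forward.

Lemma crossing_edge (V : finType) (H : {set V}) (e : {set V}) :
  inK e -> ~~ [exists P in [set H; ~: H], e \subset P] ->
  exists a b, [/\ a \in H, b \notin H & e = [set a; b]].
Proof.
move=> /cards2P [u [w [uw ->]]] not_inside.
have part P : P \in [set H; ~: H] -> ~~ ([set u; w] \subset P).
  by move=> PH; apply: contra not_inside => uwP; apply/existsP; exists P; rewrite PH.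
case: (boolP (u \in H)) => uH; case: (boolP (w \in H)) => wH.
- by case/negP: (part H (set21 _ _)); rewrite subUset !sub1set uH wH.
- by exists u, w.
- by exists w, u; rewrite setUC.
- by case/negP: (part (~: H) (set22 _ _)); rewrite subUset !sub1set !inE uH wH.
Qed.

Section Assembly.
Variables (V : finType) (E : {set {set V}}) (r : nat) (HA : 'I_r -> {set {set V}}).
Hypothesis hap : HAP_table HA.

Lemma colour_decomposition k (M : {set V} * 'I_r -> nat) :
  (forall e, e \in E -> inK e) ->
  (forall d a, \sum_(b | b != a) M ([set a; b], d) = k) ->
  (forall e d, 0 < M (e, d) -> e \in E /\ ~~ [exists P in HA d, e \subset P]) ->
  forall d, exists qs : seq {set {set V}}, [/\ size qs = k,
    forall q, q \in qs -> perfect_matching_B (HA d) q &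
    forall e, \sum_(q <- qs) (e \in q : nat) = M (e, d)].
Proof.
move=> EK Mdeg Msupp d; have /existsP [H /andP [/eqP HAd /eqP H_half]] := hap d.
have cross : crossing H (fun e => M (e, d)).
  by move=> e /Msupp [/EK eK]; rewrite HAd; apply: crossing_edge.
have [qs [size_qs qsPM qsM]] := regular_decomposition H_half cross (Mdeg d).
by exists qs; rewrite HAd.
Qed.

Definition target_vec : vec V :=
  ([ffun e => nat_of_bool (e \in E)], [ffun c => multiplicity HA c]).

Lemma multiplicity_non_eqpart c : ~~ is_eqpart c -> multiplicity HA c = 0.
Proof.
move=> nc; apply/eqP; rewrite cards_eq0; apply/eqP/setP => d; rewrite !inE.
by apply/negbTE; apply: contra nc => /eqP <-.
Qed.

Lemma Nbar_target k (qs : 'I_r -> seq {set {set V}}) :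
  (forall e, e \in E -> inK e) -> 0 < k ->
  (forall d, size (qs d) = k) -> (forall d q, q \in qs d -> perfect_matching_B (HA d) q) ->
  (forall e, \sum_(d < r) \sum_(q <- qs d) (e \in q : nat) = k * (e \in E)) ->
  Nbar (@PM V) target_vec.
Proof.
move=> EK k_gt0 size_qs qsPM qs_edges.
pose s := flatten [seq [seq chiEc q (HA d) | q <- qs d] | d <- index_enum 'I_r].
split.
  split=> [e eK|c nc]; rewrite ffunE ?multiplicity_non_eqpart //.
  by case: (boolP (e \in E)) => // /EK; rewrite (negbTE eK).
exists k; split => //; exists s; split.
  move=> w /InP /flattenP [sd /mapP [d _ ->] /mapP [q qin ->]].
  by exists (HA d), q; split; [apply: hap | split; [apply: qsPM|]].
rewrite /vscale [RHS]surjective_pairing; congr (_, _); apply/ffunP; [move=> e | move=> c].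
  rewrite !ffunE vsum_fst big_flatten big_map -qs_edges /=.
  by apply: eq_bigr => d _; rewrite big_map; apply: eq_bigr => q _; rewrite ffunE.
rewrite !ffunE vsum_snd big_flatten big_map /=.
rewrite (eq_bigr (fun d => k * (HA d == c))) => [|d _]; last first.
  rewrite big_map (eq_bigr (fun _ => nat_of_bool (HA d == c))) => [|q _]; last first.
    by rewrite ffunE eq_sym.
  by rewrite big_const_seq count_predT size_qs iter_addn_0 mulnC.
rewrite -big_distrr /=; congr (_ * _).
by rewrite /multiplicity -sum1dep_card big_mkcond; apply: eq_bigr => d _; case: (HA d == c).
Qed.
End Assembly.

Theorem mainTheorem2 (V : finType) (E : {set {set V}}) (r : nat)
  (HA : 'I_r -> {set {set V}}) :
  ~~ odd #|V| ->
  regular_graph E r ->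
  HAP_table HA ->
  (P_nonempty E HA <->
   exists v : vec V, Nbar (@PM V) v /\
     (forall e, inK e -> v.1 e = nat_of_bool (e \in E)) /\
     (forall c, is_eqpart c -> v.2 c = #|[set d : 'I_r | HA d == c]|)).
Proof.
move=> _ [EK _] hap; split.
  move=> /integral_P_point [k k_gt0 [M [Medge Mdeg Msupp]]].
  have [qs qs_spec] := fin_all_exists (colour_decomposition hap EK Mdeg Msupp).
  exists (target_vec E HA); split; last by split=> [e|c] _; rewrite ffunE.
  apply: (Nbar_target hap (qs := qs) EK k_gt0) => [d|d|e]; first by case: (qs_spec d).
    by case: (qs_spec d).
  by rewrite -Medge; apply: eq_bigr => d _; case: (qs_spec d) => _ _ ->.
move=> [v [[[vK vC] [k [k_gt0 [s [sPM sv]]]]] [v_edge v_class]]].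
have sPM' w : w \in s -> PM w by move/InP; apply: sPM.
apply: (P_nonempty_of_matchings EK k_gt0 sPM') => [e eK|c].
  by rewrite -vsum_fst -sv ffunE v_edge.
rewrite -vsum_snd -sv ffunE; case: (boolP (is_eqpart c)) => [/v_class -> //|nc].
by rewrite vC // multiplicity_non_eqpart.
Qed.
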